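(* Let $T_0,\dots,T_n$ be second-order rational operators. Then $T_0\to T_1\to\cdots\to T_n$ is an $n$-step rational Darboux transformation if and only if it is a factorization chain.
   Context: $D=d/dz$. An $n$-th order rational operator is $\sum_{k=0}^n p_k(z)D^k$ with rational $p_k$, $p_n\ne0$. $T_0\to\cdots\to T_n$ is an $n$-step rational Darboux transformation if there exist first-order rational operators $A_1,\dots,A_n$ with $A_kT_{k-1}=T_kA_k$ for $k=1,\dots,n$. It is a factorization chain if there exist first-order rational operators $A_k,B_k$ and constants $\lambda_k$ ($k=1,\dots,n$) with $T_{k-1}=B_kA_k+\lambda_k$ and $T_k=A_kB_k+\lambda_k$ for $k=1,\dots,n$. *)

From HB Require Import structures.
From mathcomp Require Import all_boot all_order all_algebra generic_quotient fraction.
Set Implicit Arguments. Unset Strict Implicit. Unset Printing Implicit Defensive.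
Import Order.TTheory GRing.Theory Num.Theory.
Local Open Scope ring_scope.

Notation ratfun F := {fraction {poly F}}.
Notation tofrac := (@FracField.tofrac _).

(* The derivation d/dz on rational functions, computed on a representative p/q:
   (p/q)' = (p' q - p q') / q^2  (independent of the representative). *)
Definition rderiv (F : numClosedFieldType) (x : ratfun F) : ratfun F :=
  let r := repr x in
  let p := \n_r in let q := \d_r in
  tofrac (p^`() * q - p * q^`()) / tofrac (q ^+ 2).

(* A rational differential operator  sum_k p_k(z) D^k  is represented by the
   polynomial  sum_k p_k X^k  in {poly (ratfun F)} (X standing for D).
   Its order is  size P - 1  (the zero operator has size 0). *)
Notation ratop F := {poly (ratfun F)}.

(* Composition of operators:
   (a D^i) o (b D^j) = a * sum_(l <= i) C(i,l) b^(l) D^(i-l+j). *)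
Definition opmul (F : numClosedFieldType) (P Q : ratop F) : ratop F :=
  \sum_(i < size P) \sum_(l < i.+1)
     (P`_i * ('C(i, l))%:R) *: (map_poly (iter l (@rderiv F)) Q * 'X^(i - l)).

Definition has_order (F : numClosedFieldType) (n : nat) (P : ratop F) : Prop :=
  size P = n.+1.

Definition constop (F : numClosedFieldType) (c : F) : ratop F := (tofrac c%:P)%:P.

Definition darboux_chain (F : numClosedFieldType) (n : nat)
    (T : nat -> ratop F) : Prop :=
  exists A : nat -> ratop F,
    forall k, (k < n)%N ->
      has_order 1 (A k) /\ opmul (A k) (T k) = opmul (T k.+1) (A k).

Definition factorization_chain (F : numClosedFieldType) (n : nat)
    (T : nat -> ratop F) : Prop :=
  exists (A B : nat -> ratop F) (lam : nat -> F),
    forall k, (k < n)%N ->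
      [/\ has_order 1 (A k), has_order 1 (B k),
          T k = opmul (B k) (A k) + constop (lam k) &
          T k.+1 = opmul (A k) (B k) + constop (lam k)].

From mathcomp Require Import all_boot all_order all_algebra generic_quotient fraction.
From mathcomp Require Import ring.
Set Implicit Arguments. Unset Strict Implicit. Unset Printing Implicit Defensive.
Import Order.TTheory GRing.Theory Num.Theory.
Local Open Scope ring_scope.

(* Let A = a0 + a1 D be first order and T0 second order. Right division gives
   T0 = B A + r with B of first order and r a rational function. Comparing the
   coefficients of D^3, ..., D^0 in A T0 = T1 A then forces T1 = A B + r and
   a1 r' = 0, so r is a constant lambda. Conversely A (B A + lambda)
   = (A B + lambda) A holds for all first-order A and B. That r' = 0 makes r
   constant is the polynomial fact that p' q = p q' forces p and q to be
   proportional: in characteristic 0 the leading terms give deg p = deg q, and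
   lead(q) p - lead(p) q solves the same equation with smaller degree. *)

Lemma frac_numden (R : idomainType) (x : {fraction R}) :
  x = tofrac \n_(repr x) / tofrac \d_(repr x).
Proof.
rewrite -{1}[x]reprK; unlock FracField.tofrac.
rewrite -[_^-1]FracField.pi_inv -[_ * _]FracField.pi_mul.
rewrite /FracField.mulf /FracField.invf /= !numden_Ratio ?(oner_neq0, denom_ratioP) //.
by rewrite mulr1 mul1r Ratio_numden.
Qed.

Lemma coef_size_neq0 (R : nzSemiRingType) (p : {poly R}) n :
  size p = n.+1 -> p`_n != 0.
Proof. by move=> hp; rewrite -[n]/(n.+1.-1) -hp -lead_coefE lead_coef_eq0 -size_poly_eq0 hp. Qed.

Section CharZeroDerivative.
Variable R : numDomainType.
Implicit Types p q : {poly R}.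

Lemma size_deriv_char0 p : size p^`() = (size p).-1.
Proof.
have [/size1_polyC ->|hp] := leqP (size p) 1.
  by rewrite derivC size_poly0 size_polyC; case: eqP.
have p0 : p != 0 by rewrite -size_poly_gt0 ltnW.
have sp : (size p).-2.+1 = (size p).-1 by rewrite prednK // -subn1 subn_gt0.
apply/anti_leq/andP; split; first by rewrite -ltnS prednK ?lt_size_deriv ?size_poly_gt0.
have : p^`()`_(size p).-2 != 0.
  by rewrite coef_deriv sp mulrn_eq0 negb_or -lead_coefE lead_coef_eq0 p0 -sp.
by rewrite -sp ltnNge; apply: contra => /(nth_default 0) ->.
Qed.

Lemma lead_coef_deriv_char0 p : lead_coef p^`() = lead_coef p *+ (size p).-1.
Proof.
have [/size1_polyC ->|hp] := leqP (size p) 1.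
  by rewrite derivC lead_coef0 size_polyC; case: eqP; rewrite ?mulr0n.
have sp : (size p).-2.+1 = (size p).-1 by rewrite prednK // -subn1 subn_gt0.
by rewrite lead_coefE size_deriv_char0 -sp coef_deriv sp -lead_coefE.
Qed.

Lemma wronskian_eq0_size p q : p != 0 -> q != 0 ->
  p^`() * q = p * q^`() -> size p = size q.
Proof.
move=> p0 q0 /(congr1 lead_coef); rewrite !lead_coefM !lead_coef_deriv_char0.
have lpq : lead_coef p * lead_coef q != 0 by rewrite mulf_neq0 ?lead_coef_eq0.
rewrite mulrnAl mulrnAr => /(mulrIn lpq) e.
have [sp sq] : (0 < size p)%N /\ (0 < size q)%N by rewrite !size_poly_gt0.
by rewrite -(prednK sp) e prednK.
Qed.

Lemma wronskian_eq0_proportional p q : q != 0 ->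
  p^`() * q = p * q^`() -> lead_coef q *: p = lead_coef p *: q.
Proof.
move=> q0 e; have [->|p0] := eqVneq p 0; first by rewrite lead_coef0 !scale0r scaler0.
have hs := wronskian_eq0_size p0 q0 e.
set s := lead_coef q *: p - lead_coef p *: q.
have es : s^`() * q = s * q^`().
  by rewrite /s derivB !derivZ !mulrBl -!scalerAl e [q^`() * q]mulrC.
have /eqP : s = 0.
  apply/eqP/negPn/negP => s0; move: (s0); rewrite -lead_coef_eq0 lead_coefE.
  rewrite (wronskian_eq0_size s0 q0 es) coefB !coefZ -lead_coefE -hs -lead_coefE.
  by rewrite mulrC subrr eqxx.
by rewrite subr_eq0 => /eqP.
Qed.

End CharZeroDerivative.

(* Stated over an abstract field: [field] is far too slow on the concrete
   fraction field. *)
Section QuotientRule.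
Variable K : fieldType.
Implicit Types p dp q dq u du v dv : K.

Lemma quotient_ruleD p dp q dq u du v dv : q != 0 -> v != 0 ->
  ((dp * v + p * dv + (du * q + u * dq)) * (q * v) - (p * v + u * q) * (dq * v + q * dv))
    / (q * v) ^+ 2
  = (dp * q - p * dq) / q ^+ 2 + (du * v - u * dv) / v ^+ 2.
Proof. by move=> q0 v0; field; rewrite q0 v0. Qed.

Lemma quotient_ruleM p dp q dq u du v dv : q != 0 -> v != 0 ->
  ((dp * u + p * du) * (q * v) - p * u * (dq * v + q * dv)) / (q * v) ^+ 2
  = (dp * q - p * dq) / q ^+ 2 * (u / v) + p / q * ((du * v - u * dv) / v ^+ 2).
Proof. by move=> q0 v0; field; rewrite q0 v0. Qed.

End QuotientRule.

Section RationalDerivative.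
Variable F : numClosedFieldType.
Local Notation K := (ratfun F).
Local Notation D := (@rderiv F).

Lemma ratfunP (x : K) : exists p q, q != 0 /\ x = tofrac p / tofrac q.
Proof. by exists \n_(repr x), \d_(repr x); split; [exact: denom_ratioP | exact: frac_numden]. Qed.

Lemma rderivE (p q : {poly F}) : q != 0 ->
  D (tofrac p / tofrac q) = tofrac (p^`() * q - p * q^`()) / tofrac (q ^+ 2).
Proof.
move=> q0; rewrite /rderiv; set x := tofrac p / tofrac q.
have := frac_numden x; set p1 := \n_(repr x); set q1 := \d_(repr x) => hx.
have q10 : q1 != 0 by apply: denom_ratioP.
have e : p1 * q = p * q1.
  apply/eqP; rewrite -tofrac_eq !tofracM; apply/eqP.
  by move: hx => /eqP; rewrite eqr_div ?tofrac_eq0 // => /eqP ->; rewrite mulrC.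
have e' : p1^`() * q + p1 * q^`() = p^`() * q1 + p * q1^`() by rewrite -!derivM e.
apply/eqP; rewrite eqr_div ?tofrac_eq0 ?expf_neq0 // -!tofracM tofrac_eq -subr_eq0.
apply/eqP; transitivity (q * q1 * ((p1^`() * q + p1 * q^`()) - (p^`() * q1 + p * q1^`()))
     + (q1^`() * q + q^`() * q1) * (p * q1 - p1 * q)); first by ring.
by rewrite e e' !subrr mulr0 add0r mulr0.
Qed.

Lemma rderivD : {morph D : x y / x + y}.
Proof.
move=> x y; have [p [q [q0 ->]]] := ratfunP x; have [u [v [v0 ->]]] := ratfunP y.
rewrite addf_div ?tofrac_eq0 // -!tofracM -tofracD !rderivE ?mulf_neq0 //.
rewrite !(derivD, derivM, rmorphD, rmorphN, rmorphM, rmorphXn).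
by apply: quotient_ruleD; rewrite tofrac_eq0.
Qed.

Lemma rderivM x y : D (x * y) = D x * y + x * D y.
Proof.
have [p [q [q0 ->]]] := ratfunP x; have [u [v [v0 ->]]] := ratfunP y.
rewrite mulf_div -!tofracM !rderivE ?mulf_neq0 //.
rewrite !(derivD, derivM, rmorphD, rmorphN, rmorphM, rmorphXn).
by apply: quotient_ruleM; rewrite tofrac_eq0.
Qed.

Lemma rderivC (c : F) : D (tofrac c%:P) = 0.
Proof.
rewrite -[tofrac _]divr1 -tofrac1 -polyC1 rderivE ?polyC_eq0 ?oner_eq0 //.
by rewrite !derivC mul0r mulr0 subrr tofrac0 mul0r.
Qed.

Lemma rderiv0 : D 0 = 0.
Proof. by rewrite -tofrac0 -polyC0 rderivC. Qed.

Lemma iter_rderiv0 l : iter l D 0 = 0.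
Proof. by elim: l => //= l ->; rewrite rderiv0. Qed.

(* For constant x the numerator and denominator of x are proportional. *)
Definition rconst (x : K) : F :=
  lead_coef \n_(repr x) / lead_coef \d_(repr x).

Lemma rderiv_eq0 x : D x = 0 -> x = tofrac (rconst x)%:P.
Proof.
have := frac_numden x; rewrite /rconst.
set p := \n_(repr x); set q := \d_(repr x) => hx.
have q0 : q != 0 by apply: denom_ratioP.
rewrite {1 2}hx rderivE // => /eqP; rewrite mulf_eq0 invr_eq0 !tofrac_eq0.
rewrite expf_eq0 (negbTE q0) andbF orbF subr_eq0 => /eqP/(wronskian_eq0_proportional q0).
have lq0 : lead_coef q != 0 by rewrite lead_coef_eq0.
move=> /(congr1 (fun r => tofrac ((lead_coef q)^-1%:P * r))).
rewrite -!mul_polyC !mulrA -!polyCM mulVf // polyC1 mul1r !tofracM => ->.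
by rewrite mulfK ?tofrac_eq0 // mulrC.
Qed.

End RationalDerivative.

(* Lets [ring] use the hypothesis l = r. *)
Lemma eq_of_scaled_diff (R : comNzRingType) (c x y l r : R) :
  l = r -> x - y = c * (l - r) -> x = y.
Proof. by move=> -> /eqP; rewrite subrr mulr0 subr_eq0 => /eqP. Qed.
Arguments eq_of_scaled_diff {R} c {x y l r}.

Section SecondOrderOperators.
Variable F : numClosedFieldType.

(* [rderiv x] unfolds to a product, so rewriting with [_ * _] patterns would
   look inside it; [der] is a locked copy. *)
Fact der_key : unit. Proof. exact: tt. Qed.
Definition der := locked_with der_key (@rderiv F).
Local Notation D := der.
Lemma derE : der = @rderiv F. Proof. exact: locked_withE. Qed.
Lemma derD : {morph der : x y / x + y}. Proof. by rewrite derE; apply: rderivD. Qed.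
Lemma derM x y : der (x * y) = der x * y + x * der y. Proof. by rewrite derE rderivM. Qed.
Lemma der0 : der 0 = 0. Proof. by rewrite derE rderiv0. Qed.
Implicit Types A B P Q T : ratop F.

Lemma coef_opmul P Q k : (size P <= 3)%N ->
  (opmul P Q)`_k = P`_0 * Q`_k
    + P`_1 * (D Q`_k + (if k is k'.+1 then Q`_k' else 0))
    + P`_2 * (D (D Q`_k) + (if k is k'.+1 then D Q`_k' *+ 2 else 0)
              + (if k is k'.+2 then Q`_k' else 0)).
Proof.
move=> hP; rewrite derE /opmul.
rewrite (big_ord_widen 3 (fun i => \sum_(l < i.+1)
     (P`_i * ('C(i, l))%:R) *: (map_poly (iter l (@rderiv F)) Q * 'X^(i - l)))) //.
rewrite big_mkcond /=; under eq_bigr => i _.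
  rewrite (_ : (if _ then _ else _) = \sum_(l < i.+1)
     (P`_i * ('C(i, l))%:R) *: (map_poly (iter l (@rderiv F)) Q * 'X^(i - l))); last first.
    case: ifP => // /negbT; rewrite -leqNgt => hi.
    by rewrite big1 // => l _; rewrite nth_default // mul0r scale0r.
  over.
rewrite !big_ord_recr big_ord0 /= !coefD !coefZ coef0 add0r.
rewrite !coefMXn !coef_map_id0 ?iter_rderiv0 //= !big_ord0 !coef0 !add0r.
by case: k => [|[|k]]; rewrite /= !(bin0, binn, bin1, subnn, subn0, subSS); ring.
Qed.

Lemma coef_opmul_order1 B A (r : ratfun F) : (size B <= 2)%N -> (size A <= 2)%N ->
  let C := opmul B A + r%:P in
  [/\ C`_0 = B`_0 * A`_0 + B`_1 * D A`_0 + r,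
      C`_1 = B`_0 * A`_1 + B`_1 * (D A`_1 + A`_0),
      C`_2 = B`_1 * A`_1 & forall j, C`_j.+3 = 0].
Proof.
move=> hB hA; have B0 i : B`_i.+2 = 0 by rewrite nth_default // (leq_trans hB).
have A0 i : A`_i.+2 = 0 by rewrite nth_default // (leq_trans hA).
have hB3 : (size B <= 3)%N by rewrite (leq_trans hB).
split=> [||| j]; rewrite coefD (coef_opmul _ _ hB3) coefC !B0 /= ?A0 ?[D 0]der0; ring.
Qed.

Definition rdivop T A : ratop F :=
  let b1 := T`_2 / A`_1 in Poly [:: (T`_1 - b1 * (D A`_1 + A`_0)) / A`_1; b1].

Definition rmodop T A : ratfun F :=
  let B := rdivop T A in T`_0 - B`_0 * A`_0 - B`_1 * D A`_0.

Lemma size_rdivop T A : T`_2 != 0 -> A`_1 != 0 -> size (rdivop T A) = 2.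
Proof.
move=> T2 A1; have b1 : T`_2 / A`_1 != 0 := mulf_neq0 T2 (invr_neq0 A1).
by rewrite (@PolyK _ 0 [:: _; _] b1).
Qed.

Lemma opmul_rdivop T A : size A = 2 -> (size T <= 3)%N ->
  T = opmul (rdivop T A) A + (rmodop T A)%:P.
Proof.
move=> hA hT; have A1 := coef_size_neq0 hA.
move: (coef_opmul_order1 (B := rdivop T A) (rmodop T A) (size_Poly _) (eq_leq hA)).
rewrite /rmodop /rdivop !coef_Poly /=.
set b1 := T`_2 / A`_1; set b0 := (T`_1 - b1 * _) / A`_1 => -[c0 c1 c2 c3].
have hb1 : b1 * A`_1 = T`_2 by rewrite /b1 divfK.
have hb0 : b0 * A`_1 = T`_1 - b1 * (D A`_1 + A`_0) by rewrite /b0 divfK.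
apply/polyP => -[|[|[|j]]]; rewrite ?c0 ?c1 ?c2 ?c3.
- by ring.
- by rewrite hb0; ring.
- by rewrite hb1.
- by rewrite nth_default // (leq_trans hT).
Qed.

Lemma intertwining_rmodop T0 T1 A :
  size A = 2 -> (size T0 <= 3)%N -> (size T1 <= 3)%N ->
  opmul A T0 = opmul T1 A ->
  D (rmodop T0 A) = 0 /\ T1 = opmul A (rdivop T0 A) + (rmodop T0 A)%:P.
Proof.
move=> hA h0 h1 H; have A1 := coef_size_neq0 hA.
have A0 i : A`_i.+2 = 0 by rewrite nth_default ?hA.
have sA : (size A <= 3)%N by rewrite hA.
have eT0 := opmul_rdivop hA h0.
have sB : (size (rdivop T0 A) <= 2)%N := size_Poly _.
move: (rdivop T0 A) (rmodop T0 A) sB eT0 => B r sB eT0.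
have [t0 t1 t2 t3] := coef_opmul_order1 r sB (eq_leq hA); rewrite -eT0 in t0 t1 t2 t3.
have coefH k := congr1 (fun P => P`_k) H.
move: (coefH 3%N) (coefH 2%N) (coefH 1%N) (coefH 0%N) => /=.
rewrite !(coef_opmul _ _ sA) !(coef_opmul _ _ h1) /= !A0 (t3 0%N) ![D 0]der0.
rewrite t0 t1 t2 !(derD, derM) => E3 E2 E1 E0.
have s2 : T1`_2 = A`_1 * B`_1.
  by apply: (mulIf A1); apply: (eq_of_scaled_diff (-1) E3); ring.
rewrite s2 in E2 E1 E0.
have s1 : T1`_1 = A`_0 * B`_1 + A`_1 * (D B`_1 + B`_0).
  by apply: (mulIf A1); apply: (eq_of_scaled_diff (-1) E2); ring.
rewrite s1 in E1 E0.
have s0 : T1`_0 = A`_0 * B`_0 + A`_1 * D B`_0 + r.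
  by apply: (mulIf A1); apply: (eq_of_scaled_diff (-1) E1); ring.
rewrite s0 in E0.
split; first by apply: (mulIf A1); apply: (eq_of_scaled_diff 1 E0); ring.
have [u0 u1 u2 u3] := coef_opmul_order1 r (eq_leq hA) sB.
apply/polyP => -[|[|[|j]]]; rewrite ?u0 ?u1 ?u2 ?u3 //.
by rewrite nth_default // (leq_trans h1).
Qed.

Lemma opmul_factorization_intertwining A B (c : F) :
  (size A <= 2)%N -> (size B <= 2)%N ->
  opmul A (opmul B A + constop c) = opmul (opmul A B + constop c) A.
Proof.
move=> hA hB; have A0 i : A`_i.+2 = 0 by rewrite nth_default // (leq_trans hA).
have sA : (size A <= 3)%N by rewrite (leq_trans hA).
have Dc : D (tofrac c%:P) = 0 by rewrite derE rderivC.
have [t0 t1 t2 t3] := coef_opmul_order1 (tofrac c%:P) hB hA.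
have [u0 u1 u2 u3] := coef_opmul_order1 (tofrac c%:P) hA hB.
have sAB : (size (opmul A B + constop c)%R <= 3)%N.
  by apply/leq_sizeP => -[|[|[|j]]] // _; exact: (u3 j).
apply/polyP => j; rewrite (coef_opmul _ _ sA) (coef_opmul _ _ sAB) u0 u1 u2.
case: j => [|[|[|[|j]]]] /=;
  by rewrite ?t0 ?t1 ?t2 ?t3 ?(derD, derM) ?Dc !A0 ?[D 0]der0; ring.
Qed.

Lemma intertwining_factorization A T0 T1 :
  size A = 2 -> size T0 = 3 -> (size T1 <= 3)%N -> opmul A T0 = opmul T1 A ->
  let B := rdivop T0 A in let c := rconst (rmodop T0 A) in
  [/\ size B = 2, T0 = opmul B A + constop c & T1 = opmul A B + constop c].
Proof.
move=> hA h0 h1 H /=; have [hr eT1] := intertwining_rmodop hA (eq_leq h0) h1 H.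
have er : rmodop T0 A = tofrac (rconst (rmodop T0 A))%:P.
  by apply: rderiv_eq0; rewrite -derE.
rewrite /constop -er; split=> //.
  exact: size_rdivop (coef_size_neq0 h0) (coef_size_neq0 hA).
exact: opmul_rdivop hA (eq_leq h0).
Qed.

End SecondOrderOperators.

Local Close Scope ring_scope.

Theorem mainTheorem2 (F : numClosedFieldType) (n : nat) (T : nat -> ratop F) :
  (forall k, (k <= n)%N -> has_order 2 (T k)) ->
  (darboux_chain n T <-> factorization_chain n T).
Proof.
move=> hT; split.
- case=> A HA; exists A, (fun k => rdivop (T k) (A k)).
  exists (fun k => rconst (rmodop (T k) (A k))) => k hk.
  have [oA eA] := HA k hk.
  have [oB e0 e1] := intertwining_factorization oA (hT k (ltnW hk)) (eq_leq (hT k.+1 hk)) eA.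
  by split.
- case=> A [B [lam H]]; exists A => k hk.
  have [oA oB -> ->] := H k hk; split=> //.
  exact: opmul_factorization_intertwining (eq_leq oA) (eq_leq oB).
Qed.
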